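(* Let $\beta,p,n$ be positive integers and $\mathcal{S}=\mathcal{S}_n(\beta,p)$. If $j$ is an integer with $n-\log_2|\mathcal{S}|+\log_2 n\le j\le n$, then there exists an $(n,j)$ linear code $B_j$ such that $m_{B_j}<1$, where $m_{B}=|V_n\setminus(B+\mathcal{S})|$; that is, $B_j+\mathcal{S}=V_n$.
   Context: $V_n=\{0,1\}^n$ with componentwise addition mod 2. A binary vector is $(\beta,p)$-window-weight-limited if every $\beta$ consecutive entries contain at most $p$ ones; $\mathcal{S}_n(\beta,p)$ is the set of such vectors of length $n$. For $B_1,B_2\subseteq V_n$, $B_1+B_2=\{\mathbf{b}_1+\mathbf{b}_2:\mathbf{b}_i\in B_i\}$. An $(n,j)$ linear code is a $j$-dimensional subspace of $V_n$. *)

From Stdlib Require Import Reals.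
From mathcomp Require Import all_boot all_order all_algebra.
Set Implicit Arguments. Unset Strict Implicit. Unset Printing Implicit Defensive.
Import GRing.Theory.

Notation Vn n := ('rV['F_2]_n).

Definition window_weight (n beta : nat) (v : Vn n) (i : nat) : nat :=
  #|[set k : 'I_n | (i <= k < i + beta)%N && (v ord0 k == 1%R)]|.

Definition wwl (n beta p : nat) (v : Vn n) : bool :=
  [forall i : 'I_n, (i + beta <= n)%N ==> (window_weight beta v i <= p)%N].

Definition Sset (n beta p : nat) : {set Vn n} := [set v | wwl beta p v].

(* B is given as the row space of a square matrix G; (b <= G)%MS means b in B.
   m_B = |V_n \ (B + S)|. *)
Definition sumset (n : nat) (G : 'M['F_2]_n) (S : {set Vn n}) : {set Vn n} :=
  [set v | [exists b : Vn n, [exists s : Vn n,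
     [&& (b <= G)%MS, s \in S & v == (b + s)%R]]]].

Definition mB (n : nat) (G : 'M['F_2]_n) (S : {set Vn n}) : nat :=
  #|[set: Vn n] :\: sumset G S|.

Definition log2 (x : R) : R := Rdiv (ln x) (ln 2).

(* Greedy construction.  If U is the set of vectors not covered by B + S,
   then B + <v> leaves uncovered only vectors x with x and x - v both in U;
   averaging over v, some v leaves at most |U|^2 / 2^n of them.  Hence j
   greedy steps shrink the uncovered density from at most 1 - |S|/2^n to at
   most (1 - |S|/2^n)^(2^j) <= exp (- |S| 2^j / 2^n) <= e^-n < 2^-n, so
   nothing is left uncovered; finally enlarge B to dimension exactly j. *)

From Stdlib Require Import Reals Lra.
From mathcomp Require Import all_boot all_order all_algebra.
Set Implicit Arguments. Unset Strict Implicit. Unset Printing Implicit Defensive.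
Import GRing.Theory.

Lemma card_translates_sum (V : finZmodType) (U : {set V}) :
  (\sum_(v : V) #|[set x in U | (x - v)%R \in U]| = #|U| ^ 2)%N.
Proof.
transitivity (\sum_(v : V) \sum_(x in U) ((x - v)%R \in U))%N.
  apply: eq_bigr => v _; rewrite -sum1_card big_mkcond [RHS]big_mkcond /=.
  by apply: eq_bigr => x _; rewrite inE; case: (x \in U).
rewrite exchange_big /= expnS expn1 -sum_nat_const; apply: eq_bigr => x _.
have subI : injective (fun v : V => x - v)%R := subrI x.
rewrite -(card_preimset U subI) -sum1_card [RHS]big_mkcond /=.
by apply: eq_bigr => v _; rewrite inE; case: (_ \in U).
Qed.

Lemma exists_translate_small_overlap (V : finZmodType) (U : {set V}) :
  exists v : V, (#|[set x in U | (x - v)%R \in U]| * #|V| <= #|U| ^ 2)%N.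
Proof.
pose overlap v := #|[set x in U | (x - v)%R \in U]|.
case: (@arg_minnP _ 0%R xpredT overlap) => // v _ v_min; exists v.
rewrite -card_translates_sum mulnC -sum_nat_const.
by apply: leq_sum => u _; apply: v_min.
Qed.

Lemma mem0_Sset n beta p : (0 : Vn n)%R \in Sset n beta p.
Proof.
rewrite inE; apply/forallP => i; apply/implyP => _.
rewrite /window_weight (_ : [set k | _] = set0) ?cards0 //.
by apply/setP => k; rewrite !inE mxE andbF.
Qed.

Lemma card_Vn n : #|Vn n| = (2 ^ n)%N.
Proof. by rewrite card_mx card_Fp // mul1n. Qed.

Definition uncovered n (G : 'M['F_2]_n) (S : {set Vn n}) : {set Vn n} :=
  ~: sumset G S.

Lemma mB_uncovered n (G : 'M['F_2]_n) (S : {set Vn n}) :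
  mB G S = #|uncovered G S|.
Proof. by rewrite /mB setTD. Qed.

Section Uncovered.
Variables (n : nat) (S : {set Vn n}).

Lemma mem_sumset (G : 'M['F_2]_n) (b s : Vn n) :
  (b <= G)%MS -> s \in S -> (b + s)%R \in sumset G S.
Proof.
by move=> bG sS; rewrite inE; apply/existsP; exists b; apply/existsP; exists s; rewrite bG sS /=.
Qed.

Lemma sumsetP {G : 'M['F_2]_n} {x : Vn n} :
  reflect (exists2 b, (b <= G)%MS & exists2 s, s \in S & x = (b + s)%R)
          (x \in sumset G S).
Proof.
apply: (iffP idP) => [|[b bG [s sS ->]]]; last exact: mem_sumset.
rewrite inE => /existsP[b /existsP[s /and3P[bG sS /eqP ->]]].
by exists b => //; exists s.
Qed.

Lemma uncoveredS (B G : 'M['F_2]_n) :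
  (B <= G)%MS -> uncovered G S \subset uncovered B S.
Proof.
move=> BG; apply/subsetP => x; rewrite !in_setC; apply: contra.
by case/sumsetP => b bB [s sS ->]; apply: mem_sumset (submx_trans bB BG) sS.
Qed.

Lemma uncovered_adds_row (B : 'M['F_2]_n) (v : Vn n) :
  uncovered (B + v)%MS S \subset
    [set x in uncovered B S | (x - v)%R \in uncovered B S].
Proof.
apply/subsetP => x x_unc; rewrite inE (subsetP (uncoveredS (addsmxSl B v))) //=.
move: x_unc; rewrite !in_setC; apply: contra => /sumsetP[b bB [s sS /eqP]].
rewrite subr_eq => /eqP ->; rewrite addrAC.
by apply: mem_sumset sS; rewrite addmx_sub_adds ?submx_refl.
Qed.

Lemma card_uncovered0 : (#|uncovered 0 S| <= #|Vn n| - #|S|)%N.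
Proof.
rewrite -(cardsC S) addKn.
apply/subset_leq_card/subsetP => x; rewrite !in_setC; apply: contra => xS.
by rewrite -[x]add0r mem_sumset ?sub0mx.
Qed.

Lemma exists_uncovered_decay (k : nat) : exists2 B : 'M['F_2]_n,
  (\rank B <= k)%N &
  (#|uncovered B S| * #|Vn n| ^ (2 ^ k) <= #|Vn n| * #|uncovered 0 S| ^ (2 ^ k))%N.
Proof.
have N_gt0 : (0 < #|Vn n|)%N by apply/card_gt0P; exists 0%R.
elim: k => [|k [B rB decayB]].
  by exists 0%R; rewrite ?mxrank0 // expn0 !expn1 mulnC.
have [v small_v] : exists v : Vn n,
    (#|[set x in uncovered B S | (x - v)%R \in uncovered B S]| * #|Vn n|
      <= #|uncovered B S| ^ 2)%N := exists_translate_small_overlap _.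
exists (B + v)%MS.
  apply: leq_trans (mxrank_adds_leqif B v) _.
  by rewrite -[k.+1]addn1 leq_add // rank_rV leq_b1.
have step := subset_leq_card (uncovered_adds_row B v).
rewrite expnSr !expnM -(leq_pmul2l N_gt0).
move: step small_v decayB; set N := #|Vn n|; set P := (N ^ 2 ^ k)%N.
set A := (#|uncovered 0 S| ^ 2 ^ k)%N.
move: #|_| #|_| #|_| => u_old overlap u_new le_new le_overlap le_old.
apply: (@leq_trans (overlap * N * P ^ 2)).
  by rewrite mulnCA mulnA leq_mul2r leq_mul2r le_new !orbT.
apply: (@leq_trans ((u_old * P) ^ 2)); first by rewrite expnMn leq_mul2r le_overlap orbT.
apply: leq_trans (_ : (N * A) ^ 2 <= _); first by rewrite leq_exp2r.
by rewrite expnMn mulnA.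
Qed.

End Uncovered.

Lemma mxrank_adds_row_notsub (F : fieldType) m n (G : 'M[F]_(m, n)) (v : 'rV[F]_n) :
  ~~ (v <= G)%MS -> \rank (G + v)%MS = (\rank G).+1.
Proof.
move=> vNG; apply/eqP; rewrite eqn_leq; apply/andP; split.
  apply: leq_trans (mxrank_adds_leqif G v) _.
  by rewrite -[(\rank G).+1]addn1 leq_add2l rank_rV leq_b1.
apply: rank_ltmx; rewrite ltmxE addsmxSl /=.
by apply: contra vNG; apply: submx_trans (addsmxSr G v).
Qed.

Lemma exists_supmx_rank (F : fieldType) n (B : 'M[F]_n) r :
  (\rank B <= r <= n)%N -> exists2 G : 'M[F]_n, (B <= G)%MS & \rank G = r.
Proof.
elim: r => [|r IH] /andP[le_Br le_rn].
  by exists B => //; apply/eqP; rewrite -leqn0.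
move: le_Br; rewrite leq_eqVlt ltnS => /orP[/eqP <- | le_Br]; first by exists B.
have [|G BG rG] := IH; first by rewrite le_Br ltnW.
have [i e_iNG] : exists i, ~~ (row i 1%:M <= G)%MS.
  by apply/row_subPn; rewrite sub1mx -col_leq_rank rG -ltnNge.
exists (G + row i 1%:M)%MS; first exact: submx_trans BG (addsmxSl _ _).
by rewrite mxrank_adds_row_notsub // rG.
Qed.

Section RealEstimates.
Local Open Scope R_scope.

Lemma INR_expn (m k : nat) : INR (m ^ k)%N = INR m ^ k.
Proof. by elim: k => [|k IH]; rewrite ?expnS ?mult_INR ?IH. Qed.

Lemma exp_le_exp (x y : R) : x <= y -> exp x <= exp y.
Proof. by case=> [/exp_increasing/Rlt_le | ->]; last exact: Rle_refl. Qed.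

Lemma exp_pow (a : R) (M : nat) : exp a ^ M = exp (INR M * a).
Proof.
elim: M => [|M IH]; first by rewrite /= Rmult_0_l exp_0.
change (exp a * exp a ^ M = exp (INR M.+1 * a)).
by rewrite IH -exp_plus S_INR; congr exp; ring.
Qed.

Lemma one_sub_pow_le_exp (x : R) (M : nat) :
  x <= 1 -> (1 - x) ^ M <= exp (- (INR M * x)).
Proof.
move=> x_le1; have := exp_ineq1_le (- x) => le_exp.
apply: Rle_trans (pow_incr (1 - x) (exp (- x)) M _) _; first lra.
by rewrite exp_pow; apply: exp_le_exp; lra.
Qed.

Lemma pow2_mul_exp_opp_lt1 (n : nat) : (0 < n)%N -> 2 ^ n * exp (- INR n) < 1.
Proof.
move=> n_gt0; have e_gt2 := exp_ineq1 1 ltac:(lra).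
have e_inv : 0 <= 2 * / exp 1 < 1.
  have := Rinv_0_lt_compat _ (exp_pos 1); split; first lra.
  by apply: (Rmult_lt_reg_r (exp 1)); [exact: exp_pos | field_simplify; lra].
rewrite -[INR n]Rmult_1_r Ropp_mult_distr_r -exp_pow exp_Ropp -Rpow_mult_distr.
by case: (pow_lt_1_compat _ n e_inv (elimT ltP n_gt0)).
Qed.

Lemma pow2_mul_sub_pow_lt (n s M : nat) :
  (0 < n)%N -> (0 < s <= 2 ^ n)%N -> (n * 2 ^ n <= s * M)%N ->
  (2 ^ n * (2 ^ n - s) ^ M < (2 ^ n) ^ M)%N.
Proof.
move=> n_gt0 /andP[s_gt0 /leP s_le] /leP/le_INR le_nM; apply/ltP/INR_lt.
rewrite mult_INR !INR_expn minus_INR // INR_expn.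
move/le_INR: s_le; move: le_nM; rewrite !mult_INR INR_expn.
have -> : INR 2 = 2 by [].
set N := 2 ^ n; set x := INR s / N => le_nM s_le.
have N_gt0 : 0 < N by apply: pow_lt; lra.
have s_gt0R : 0 < INR s by apply/lt_0_INR/ltP.
have N_sub : N - INR s = N * (1 - x) by rewrite /x; field; lra.
have x_le1 : x <= 1.
  by rewrite /x; apply: (Rmult_le_reg_r N) => //; field_simplify; lra.
have n_le_Mx : INR n <= INR M * x.
  by rewrite /x; apply: (Rmult_le_reg_r N) => //; field_simplify; lra.
have NM_gt0 : 0 < N ^ M by apply: pow_lt.
rewrite N_sub Rpow_mult_distr.
apply: (Rle_lt_trans _ (N ^ M * (N * exp (- INR n)))).
  rewrite -Rmult_assoc [N * _]Rmult_comm Rmult_assoc.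
  apply/Rmult_le_compat_l/Rmult_le_compat_l; try lra.
  apply: Rle_trans (one_sub_pow_le_exp M x_le1) _.
  by apply: exp_le_exp; lra.
rewrite -{2}[N ^ M]Rmult_1_r; apply: Rmult_lt_compat_l => //.
exact: pow2_mul_exp_opp_lt1.
Qed.

Lemma expn_le_of_log2_le (n s j : nat) : (0 < n)%N -> (0 < s)%N ->
  INR n - log2 (INR s) + log2 (INR n) <= INR j -> (n * 2 ^ n <= s * 2 ^ j)%N.
Proof.
move=> /ltP/lt_0_INR n_gt0 /ltP/lt_0_INR s_gt0; rewrite /log2 => le_log.
apply/leP/INR_le; rewrite !mult_INR !INR_expn.
have -> : INR 2 = 2 by [].
have ln2_gt0 : 0 < ln 2 by have := ln_lt_2; lra.
have pow2n_gt0 : 0 < 2 ^ n by apply: pow_lt; lra.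
have pow2j_gt0 : 0 < 2 ^ j by apply: pow_lt; lra.
have two_gt0 : 0 < 2 by lra.
have le_ln : ln (INR n * 2 ^ n) <= ln (INR s * 2 ^ j).
  rewrite (ln_mult _ _ n_gt0 pow2n_gt0) (ln_mult _ _ s_gt0 pow2j_gt0).
  rewrite (ln_pow _ two_gt0 n) (ln_pow _ two_gt0 j).
  have ln_div_mul x : x = x / ln 2 * ln 2.
    by field; apply: Rgt_not_eq.
  rewrite [ln (INR n)]ln_div_mul [ln (INR s)]ln_div_mul -!Rmult_plus_distr_r.
  apply: Rmult_le_compat_r; first exact: Rlt_le.
  move: le_log; set a := ln (INR s) / ln 2; set b := ln (INR n) / ln 2.
  lra.
rewrite -(exp_ln (INR n * 2 ^ n)); last exact: Rmult_lt_0_compat.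
rewrite -(exp_ln (INR s * 2 ^ j)); last exact: Rmult_lt_0_compat.
exact: exp_le_exp.
Qed.

End RealEstimates.

Theorem lemma7 (beta p n : nat) (hbeta : (0 < beta)%N) (hp : (0 < p)%N)
  (hn : (0 < n)%N) (j : nat) :
  Rle (Rplus (Rminus (INR n) (log2 (INR #|Sset n beta p|))) (log2 (INR n))) (INR j) ->
  (j <= n)%N ->
  exists G : 'M['F_2]_n,
    \rank G = j /\ (mB G (Sset n beta p) < 1)%N.
Proof.
move=> le_log le_jn; set S := Sset n beta p in le_log *.
have S_gt0 : (0 < #|S|)%N by apply/card_gt0P; exists 0%R; apply: mem0_Sset.
have S_range : (0 < #|S| <= 2 ^ n)%N by rewrite S_gt0 -card_Vn max_card.
have [B rB decayB] := exists_uncovered_decay S j.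
have B_covers : #|uncovered B S| = 0%N.
  have lt_pow := pow2_mul_sub_pow_lt hn S_range (expn_le_of_log2_le hn S_gt0 le_log).
  have pow_gt0 : (0 < (2 ^ n) ^ 2 ^ j)%N by rewrite !expn_gt0.
  apply/eqP; rewrite -leqn0 -ltnS -(ltn_pmul2r pow_gt0) mul1n.
  apply: leq_ltn_trans lt_pow; rewrite card_Vn in decayB.
  apply: leq_trans decayB _; rewrite leq_mul2l leq_exp2r ?expn_gt0 //.
  by rewrite -card_Vn card_uncovered0 orbT.
have [|G BG rG] := @exists_supmx_rank _ _ B j; first by rewrite rB.
exists G; split => //; rewrite mB_uncovered.
by apply: leq_ltn_trans (subset_leq_card (uncoveredS S BG)) _; rewrite B_covers.
Qed.
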